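(* Let $\tau_1,\tau_2\in\mathcal{T}$ be such that $(\mathbb{R},\tau_1)$ and $(\mathbb{R},\tau_2)$ are locally connected. (a) If $(\mathbb{R},\tau_1)$ is separable and $(\mathbb{R},\tau_2)$ is not discrete, then $(\mathbb{R},\tau_1)$ is homeomorphic to a subspace of $(\mathbb{R},\tau_2)$. (b) If $(\mathbb{R},\tau_2)$ is neither separable nor discrete, then $(\mathbb{R},\tau_1)$ is homeomorphic to a subspace of $(\mathbb{R},\tau_2)$.
   Context: $\eta$ denotes the Euclidean topology on $\mathbb{R}$; $\mathcal{T}$ is the family of all topologies on $\mathbb{R}$ finer than $\eta$. *)

From Stdlib Require Import Reals Rtopology.
Open Scope R_scope.

Record is_topology (tau : (R -> Prop) -> Prop) : Prop := {
  top_ext : forall U V : R -> Prop, (forall x, U x <-> V x) -> tau U -> tau V;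
  top_empty : tau (fun _ => False);
  top_full : tau (fun _ => True);
  top_inter : forall U V, tau U -> tau V -> tau (fun x => U x /\ V x);
  top_union : forall F : (R -> Prop) -> Prop,
      (forall U, F U -> tau U) -> tau (fun x => exists U, F U /\ U x)
}.

Definition finer_than_euclidean (tau : (R -> Prop) -> Prop) : Prop :=
  forall U : R -> Prop, open_set U -> tau U.

Definition in_calT (tau : (R -> Prop) -> Prop) : Prop :=
  is_topology tau /\ finer_than_euclidean tau.

Definition connected_in (tau : (R -> Prop) -> Prop) (A : R -> Prop) : Prop :=
  ~ exists U V : R -> Prop,
      tau U /\ tau V /\
      (forall x, A x -> U x \/ V x) /\
      (exists x, A x /\ U x) /\ (exists x, A x /\ V x) /\
      (forall x, A x -> U x -> V x -> False).

Definition locally_connected (tau : (R -> Prop) -> Prop) : Prop :=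
  forall (x : R) (U : R -> Prop), tau U -> U x ->
    exists V : R -> Prop, tau V /\ V x /\ (forall y, V y -> U y) /\ connected_in tau V.

Definition countable_set (D : R -> Prop) : Prop :=
  exists f : nat -> R, forall x, D x -> exists n, f n = x.

Definition separable (tau : (R -> Prop) -> Prop) : Prop :=
  exists D : R -> Prop, countable_set D /\
    (forall U, tau U -> (exists x, U x) -> exists x, U x /\ D x).

Definition discrete (tau : (R -> Prop) -> Prop) : Prop :=
  forall x : R, tau (fun y => y = x).

(* (R,tau1) is homeomorphic to a subspace of (R,tau2): an injective map f
   that is continuous and open onto its image f(R) with the subspace topology. *)
Definition embeds_into (tau1 tau2 : (R -> Prop) -> Prop) : Prop :=
  exists f : R -> R,
    (forall x y, f x = f y -> x = y) /\
    (forall W, tau2 W -> tau1 (fun x => W (f x))) /\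
    (forall U, tau1 U -> exists W, tau2 W /\ forall x, U x <-> W (f x)).

From Stdlib Require Import Reals Rtopology Lra Lia ClassicalEpsilon Classical Cantor.
From Coquelicot Require Import Coquelicot.
Open Scope R_scope.

(* A topology tau finer than the Euclidean one has all Euclidean half-lines
   open, so its connected sets are intervals; if it is locally connected,
   every point x is isolated, or has a neighbourhood base of intervals
   [x, x + e), or of intervals (x - e, x], or of Euclidean balls.  The
   non-isolated one-sided points form a countable set, and a strictly
   increasing staircase map, arctan plus a small jump at each of them,
   carries the non-isolated part of (R, tau1) homeomorphically onto a subset
   of a Euclidean interval.  A non-discrete tau2 has an open interval on which
   it is Euclidean, and it remains to place the isolated points of tau1
   discretely outside it: in (a) they are countable and go to a sequence
   converging to an end of the interval; in (b) tau2 has uncountably many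
   isolated points, and a Cantor scheme yields continuum many of them. *)

(** * Points of a locally connected topology finer than the Euclidean one *)

Definition isolated (tau : (R -> Prop) -> Prop) (x : R) : Prop := tau (fun y => y = x).

Definition right_sided (tau : (R -> Prop) -> Prop) (x : R) : Prop :=
  exists U, tau U /\ U x /\ forall y, U y -> x <= y.

Definition left_sided (tau : (R -> Prop) -> Prop) (x : R) : Prop :=
  exists U, tau U /\ U x /\ forall y, U y -> y <= x.

Definition euclidean_at (tau : (R -> Prop) -> Prop) (x : R) : Prop :=
  forall W, tau W -> W x -> exists e, 0 < e /\ forall y, Rabs (y - x) < e -> W y.

Lemma euclidean_at_not_isolated tau x : euclidean_at tau x -> ~ isolated tau x.
Proof.
  intros He Hi. destruct (He _ Hi eq_refl) as [e [He0 Hball]].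
  assert (x + e / 2 = x) by (apply Hball; rewrite Rabs_pos_eq; lra). lra.
Qed.

Section FinerTopology.

Variable tau : (R -> Prop) -> Prop.
Hypothesis Htau : in_calT tau.

Lemma calT_open_euclidean (U : R -> Prop) :
  (forall x, U x -> exists d, 0 < d /\ forall y, Rabs (y - x) < d -> U y) -> tau U.
Proof.
  intros HU. apply (proj2 Htau). intros x Ux.
  destruct (HU x Ux) as [d [Hd Hball]]. exists (mkposreal d Hd). exact Hball.
Qed.

Lemma calT_open_ext (U V : R -> Prop) : tau U -> (forall x, U x <-> V x) -> tau V.
Proof. intros HU HUV. exact (top_ext _ (proj1 Htau) U V HUV HU). Qed.

Lemma calT_open_and (U V : R -> Prop) : tau U -> tau V -> tau (fun x => U x /\ V x).
Proof. apply (top_inter _ (proj1 Htau)). Qed.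

Lemma calT_open_local (P : R -> Prop) :
  (forall x, P x -> exists V, tau V /\ V x /\ forall y, V y -> P y) -> tau P.
Proof.
  intros HP.
  pose proof (top_union _ (proj1 Htau) (fun V => tau V /\ forall y, V y -> P y)
    (fun V HV => proj1 HV)) as Hunion.
  apply (calT_open_ext _ _ Hunion). intros x; split.
  - intros [V [[_ HVP] Vx]]. exact (HVP x Vx).
  - intros Px. destruct (HP x Px) as [V [HV [Vx HVP]]]. exists V. tauto.
Qed.

Lemma calT_open_or (U V : R -> Prop) : tau U -> tau V -> tau (fun x => U x \/ V x).
Proof.
  intros HU HV. apply calT_open_local. intros x [Ux|Vx]; [exists U | exists V]; auto.
Qed.

Lemma calT_open_lt c : tau (fun y => y < c).
Proof.
  apply calT_open_euclidean. intros x Hx. exists (c - x). split; [lra|].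
  intros y Hy. apply Rabs_def2 in Hy. lra.
Qed.

Lemma calT_open_gt c : tau (fun y => c < y).
Proof.
  apply calT_open_euclidean. intros x Hx. exists (x - c). split; [lra|].
  intros y Hy. apply Rabs_def2 in Hy. lra.
Qed.

Lemma calT_open_neq c : tau (fun y => y <> c).
Proof.
  apply (calT_open_ext _ _ (calT_open_or _ _ (calT_open_lt c) (calT_open_gt c))).
  intros x; split; [intros [H|H]; lra|]. intros H.
  destruct (Rtotal_order x c) as [h|[h|h]]; tauto.
Qed.

Lemma calT_open_interval a b : tau (fun y => a < y < b).
Proof. exact (calT_open_and _ _ (calT_open_gt a) (calT_open_lt b)). Qed.

Lemma calT_open_ball c r : tau (fun y => Rabs (y - c) < r).
Proof.
  apply calT_open_euclidean. intros x Hx. exists (r - Rabs (x - c)). split; [lra|].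
  intros y Hy. pose proof (Rabs_triang (y - x) (x - c)).
  replace (y - x + (x - c)) with (y - c) in * by ring. lra.
Qed.

(* A connected set cannot straddle a point whose one-sided or singleton
   neighbourhood is open. *)
Lemma connected_convex A a b c : connected_in tau A -> A a -> A b -> a < c < b -> A c.
Proof.
  intros HA Aa Ab Hc. apply NNPP. intros Anc. apply HA.
  exists (fun y => y < c), (fun y => c < y).
  repeat split; [apply calT_open_lt | apply calT_open_gt | | exists a; split; auto; lra
                | exists b; split; auto; lra | intros y _ h1 h2; lra].
  intros y Ay. destruct (Rtotal_order y c) as [h|[h|h]]; auto. subst; contradiction.
Qed.

Lemma connected_right_sided V x : right_sided tau x -> connected_in tau V -> V x ->
  forall y, V y -> x <= y.
Proof.
  intros [U [HU [Ux HUr]]] HV Vx y Vy. apply Rnot_lt_le. intros Hyx. apply HV.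
  exists (fun z => z < x), (fun z => U z \/ x < z).
  repeat split; [apply calT_open_lt | apply calT_open_or; auto; apply calT_open_gt | |
                 exists y; auto
                | exists x; auto | intros z _ h1 [h2|h2]; [apply HUr in h2|]; lra].
  intros z _. destruct (Rtotal_order z x) as [h|[h|h]]; auto. subst; auto.
Qed.

Lemma connected_left_sided V x : left_sided tau x -> connected_in tau V -> V x ->
  forall y, V y -> y <= x.
Proof.
  intros [U [HU [Ux HUl]]] HV Vx y Vy. apply Rnot_lt_le. intros Hxy. apply HV.
  exists (fun z => x < z), (fun z => U z \/ z < x).
  repeat split; [apply calT_open_gt | apply calT_open_or; auto; apply calT_open_lt | |
                 exists y; auto
                | exists x; auto | intros z _ h1 [h2|h2]; [apply HUl in h2|]; lra].
  intros z _. destruct (Rtotal_order z x) as [h|[h|h]]; auto. subst; auto.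
Qed.

Lemma connected_isolated V x y : connected_in tau V -> V x -> V y -> isolated tau y -> x = y.
Proof.
  intros HV Vx Vy Hy. apply NNPP. intros Hxy. apply HV.
  exists (fun z => z = y), (fun z => z <> y).
  repeat split; auto; [apply calT_open_neq | | exists y; auto | exists x; auto].
  intros z _. destruct (classic (z = y)); auto.
Qed.

Lemma right_left_sided_isolated x : right_sided tau x -> left_sided tau x -> isolated tau x.
Proof.
  intros [U [HU [Ux HUr]]] [V [HV [Vx HVl]]].
  apply (calT_open_ext _ _ (calT_open_and U V HU HV)). intros z; split.
  - intros [h1 h2]. apply HUr in h1. apply HVl in h2. lra.
  - intros ->. auto.
Qed.

Hypothesis Hlc : locally_connected tau.

Lemma connected_nbhd_nontrivial U x : tau U -> U x -> ~ isolated tau x ->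
  exists V, tau V /\ V x /\ (forall y, V y -> U y) /\ connected_in tau V /\
    exists y, V y /\ y <> x.
Proof.
  intros HU Ux Hi. destruct (Hlc x U HU Ux) as [V [HV [Vx [VU Vc]]]].
  exists V. repeat split; auto. apply NNPP. intros Hn. apply Hi.
  apply (calT_open_ext _ _ HV). intros z; split.
  - intros Vz. apply NNPP. intros Hz. apply Hn. exists z; auto.
  - intros ->; auto.
Qed.

Lemma connected_nbhd_full x : ~ isolated tau x ->
  exists V, tau V /\ V x /\ connected_in tau V /\ exists y, V y /\ y <> x.
Proof.
  intros Hi. destruct (connected_nbhd_nontrivial (fun _ => True) x (top_full _ (proj1 Htau)) I Hi)
    as [V [HV [Vx [_ [Vc Hy]]]]]. exists V. auto.
Qed.

Lemma right_sided_nbhd x U : right_sided tau x -> ~ isolated tau x -> tau U -> U x ->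
  exists e, 0 < e /\ forall y, x <= y < x + e -> U y.
Proof.
  intros HR Hi HU Ux.
  destruct (connected_nbhd_nontrivial U x HU Ux Hi) as [V [HV [Vx [VU [Vc [y [Vy Hyx]]]]]]].
  pose proof (connected_right_sided V x HR Vc Vx y Vy).
  exists (y - x). split; [lra|]. intros z Hz. apply VU.
  destruct (Req_dec z x) as [->|Hzx]; auto. apply (connected_convex V x y); auto. lra.
Qed.

Lemma left_sided_nbhd x U : left_sided tau x -> ~ isolated tau x -> tau U -> U x ->
  exists e, 0 < e /\ forall y, x - e < y <= x -> U y.
Proof.
  intros HL Hi HU Ux.
  destruct (connected_nbhd_nontrivial U x HU Ux Hi) as [V [HV [Vx [VU [Vc [y [Vy Hyx]]]]]]].
  pose proof (connected_left_sided V x HL Vc Vx y Vy).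
  exists (x - y). split; [lra|]. intros z Hz. apply VU.
  destruct (Req_dec z x) as [->|Hzx]; auto. apply (connected_convex V y x); auto. lra.
Qed.

Lemma two_sided_euclidean x : ~ right_sided tau x -> ~ left_sided tau x -> euclidean_at tau x.
Proof.
  intros HR HL U HU Ux. destruct (Hlc x U HU Ux) as [V [HV [Vx [VU Vc]]]].
  assert (exists y1, V y1 /\ y1 < x) as [y1 [V1 H1]].
  { apply NNPP. intros Hn. apply HR. exists V. repeat split; auto. intros y Vy.
    apply Rnot_lt_le. intros h. apply Hn. exists y; auto. }
  assert (exists y2, V y2 /\ x < y2) as [y2 [V2 H2]].
  { apply NNPP. intros Hn. apply HL. exists V. repeat split; auto. intros y Vy.
    apply Rnot_lt_le. intros h. apply Hn. exists y; auto. }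
  exists (Rmin (x - y1) (y2 - x)). split; [apply Rmin_glb_lt; lra|].
  intros y Hy. apply Rabs_def2 in Hy.
  pose proof (Rmin_l (x - y1) (y2 - x)). pose proof (Rmin_r (x - y1) (y2 - x)).
  apply VU. apply (connected_convex V y1 y2); auto. lra.
Qed.

Lemma nonisolated_nbhd x : ~ isolated tau x ->
  exists V, tau V /\ V x /\ connected_in tau V /\ forall y, V y -> ~ isolated tau y.
Proof.
  intros Hi. destruct (connected_nbhd_full x Hi) as [V [HV [Vx [Vc _]]]].
  exists V. repeat split; auto. intros y Vy Hy.
  pose proof (connected_isolated V x y Vc Vx Vy Hy). subst; auto.
Qed.

(* Two non-isolated right-sided points are never close: the connected
   neighbourhood [h, y) of one of them cannot contain another one. *)
Lemma right_sided_gap h : right_sided tau h -> ~ isolated tau h ->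
  exists d, 0 < d /\ forall h', right_sided tau h' -> h < h' -> h + d <= h'.
Proof.
  intros HR Hi. destruct (connected_nbhd_full h Hi) as [V [HV [Vh [Vc [y [Vy Hy]]]]]].
  pose proof (connected_right_sided V h HR Vc Vh y Vy).
  exists (y - h). split; [lra|]. intros h' HR' Hlt. apply Rnot_lt_le. intros Hc.
  assert (V h') by (apply (connected_convex V h y); auto; lra).
  pose proof (connected_right_sided V h' HR' Vc H0 h Vh). lra.
Qed.

Lemma left_sided_gap h : left_sided tau h -> ~ isolated tau h ->
  exists d, 0 < d /\ forall h', left_sided tau h' -> h' < h -> h' <= h - d.
Proof.
  intros HL Hi. destruct (connected_nbhd_full h Hi) as [V [HV [Vh [Vc [y [Vy Hy]]]]]].
  pose proof (connected_left_sided V h HL Vc Vh y Vy).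
  exists (h - y). split; [lra|]. intros h' HL' Hlt. apply Rnot_lt_le. intros Hc.
  assert (V h') by (apply (connected_convex V y h); auto; lra).
  pose proof (connected_left_sided V h' HL' Vc H0 h Vh). lra.
Qed.

Lemma euclidean_interval_of_not_discrete : ~ discrete tau ->
  exists a b, a < b /\ forall z, a < z < b -> euclidean_at tau z.
Proof.
  intros Hd. apply not_all_ex_not in Hd as [x Hx].
  destruct (connected_nbhd_full x Hx) as [V [HV [Vx [Vc [y [Vy Hy]]]]]].
  assert (Hgen : forall a b, a < b -> V a -> V b -> forall z, a < z < b -> euclidean_at tau z).
  { intros a b Hab Va Vb z Hz. assert (Vz : V z) by (apply (connected_convex V a b); auto).
    apply two_sided_euclidean.
    - intros HR. pose proof (connected_right_sided V z HR Vc Vz a Va). lra.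
    - intros HL. pose proof (connected_left_sided V z HL Vc Vz b Vb). lra. }
  destruct (Rtotal_order x y) as [c|[c|c]]; [exists x, y | congruence | exists y, x];
    split; auto; apply Hgen; auto.
Qed.

End FinerTopology.

(** * Countable sets *)

Lemma small_pow_half e : 0 < e -> exists N, (/2) ^ N < e.
Proof.
  intros He. destruct (pow_lt_1_zero (/2) ltac:(rewrite Rabs_pos_eq; lra) e He) as [N HN].
  exists N. specialize (HN N (le_n N)). rewrite Rabs_pos_eq in HN; auto.
  apply pow_le; lra.
Qed.

Lemma pow_half_pos n : 0 < (/2) ^ n <= 1.
Proof. induction n; simpl; lra. Qed.

Definition dyadic (n : nat) : R :=
  let (i, r) := Cantor.of_nat n in let (k, l) := Cantor.of_nat r in (INR i - INR k) / 2 ^ l.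

Lemma dyadic_dense a b : a < b -> exists n, a < dyadic n < b.
Proof.
  intros Hab. destruct (small_pow_half (b - a)) as [N HN]; [lra|].
  rewrite pow_inv in HN. assert (HP : 0 < 2 ^ N) by (apply pow_lt; lra).
  set (z := up (a * 2 ^ N)). destruct (archimed (a * 2 ^ N)) as [H1 H2]. fold z in H1, H2.
  exists (Cantor.to_nat (Z.to_nat z, Cantor.to_nat (Z.to_nat (- z), N))).
  unfold dyadic. rewrite !Cantor.cancel_of_to.
  replace (INR (Z.to_nat z) - INR (Z.to_nat (- z))) with (IZR z)
    by (destruct z; simpl; rewrite ?INR_IPR; unfold IZR; lra).
  assert (1 < (b - a) * 2 ^ N).
  { apply (Rmult_lt_compat_r (2 ^ N)) in HN; auto. rewrite Rinv_l in HN; lra. }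
  split; apply (Rmult_lt_reg_r (2 ^ N)); auto; unfold Rdiv; rewrite Rmult_assoc, Rinv_l; lra.
Qed.

Lemma countable_subset (D E : R -> Prop) :
  (forall x, D x -> E x) -> countable_set E -> countable_set D.
Proof. intros H [f Hf]. exists f. intros x Dx. apply Hf, H, Dx. Qed.

Lemma countable_union (P : nat -> nat -> Prop) (S : nat -> nat -> R -> Prop) :
  (forall i j, P i j -> countable_set (S i j)) ->
  countable_set (fun x => exists i j, P i j /\ S i j x).
Proof.
  intros H.
  destruct (choice (fun (ij : nat * nat) (e : nat -> R) =>
     P (fst ij) (snd ij) -> forall x, S (fst ij) (snd ij) x -> exists n, e n = x)) as [E HE].
  { intros [i j]. destruct (classic (P i j)) as [Hp|Hp].
    - destruct (H i j Hp) as [e He]. exists e. auto.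
    - exists (fun _ => 0). intros; contradiction. }
  exists (fun n => let (i, r) := Cantor.of_nat n in let (j, k) := Cantor.of_nat r in E (i, j) k).
  intros x [i [j [Hp Hs]]]. destruct (HE (i, j) Hp x Hs) as [k Hk].
  exists (Cantor.to_nat (i, Cantor.to_nat (j, k))). rewrite !Cantor.cancel_of_to. exact Hk.
Qed.

Lemma countable_union3 (A B : R -> Prop) c : countable_set A -> countable_set B ->
  countable_set (fun x => A x \/ B x \/ x = c).
Proof.
  intros [f Hf] [g Hg].
  exists (fun n => let (i, k) := Cantor.of_nat n in
     match i with 0%nat => f k | 1%nat => g k | _ => c end).
  intros x [Ax|[Bx|Ex]].
  - destruct (Hf x Ax) as [k Hk]. exists (Cantor.to_nat (0%nat, k)).
    rewrite Cantor.cancel_of_to. auto.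
  - destruct (Hg x Bx) as [k Hk]. exists (Cantor.to_nat (1%nat, k)).
    rewrite Cantor.cancel_of_to. auto.
  - exists (Cantor.to_nat (2%nat, 0%nat)). rewrite Cantor.cancel_of_to. auto.
Qed.

Definition injective_on (S : R -> Prop) (k : R -> nat) : Prop :=
  forall h h', S h -> S h' -> k h = k h' -> h = h'.

(* Code each h by a dyadic of its interval. *)
Lemma code_of_disjoint_intervals (S : R -> Prop) (I : R -> R -> Prop) :
  (forall h, S h -> exists a b, a < b /\ forall x, a < x < b -> I h x) ->
  (forall h h' x, S h -> S h' -> I h x -> I h' x -> h = h') ->
  exists k : R -> nat, injective_on S k.
Proof.
  intros Hne Hdisj.
  destruct (choice (fun (h : R) (n : nat) => S h -> I h (dyadic n))) as [k Hk].
  { intros h. destruct (classic (S h)) as [Sh|Sh].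
    - destruct (Hne h Sh) as [a [b [Hab Hi]]]. destruct (dyadic_dense a b Hab) as [n Hn].
      exists n. intros _. apply Hi; auto.
    - exists 0%nat. intros; contradiction. }
  exists k. intros h h' Sh Sh' Heq. pose proof (Hk h Sh) as A. pose proof (Hk h' Sh') as B.
  rewrite Heq in A. eapply Hdisj; eauto.
Qed.

(** * The staircase map *)

Definition dominated (a : nat -> R) : Prop := forall n, 0 <= a n <= 2 * (/2) ^ n.

Lemma ex_series_geom_double : ex_series (fun n => 2 * (/2) ^ n).
Proof.
  apply (ex_series_scal_l (V := R_NormedModule)), ex_series_geom.
  rewrite Rabs_pos_eq; lra.
Qed.

Lemma ex_series_dominated a : dominated a -> ex_series a.
Proof.
  intros H. apply (ex_series_le (V := R_CompleteNormedModule) a (fun n => 2 * (/2) ^ n));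
    [|exact ex_series_geom_double].
  intros n. change (norm (a n)) with (Rabs (a n)). rewrite Rabs_pos_eq; apply H.
Qed.

Lemma Series_dominated_ge0 a : dominated a -> 0 <= Series a.
Proof.
  intros H. replace 0 with (Series (fun n => 0 * a n)) at 1
    by (rewrite Series_scal_l; ring).
  apply Series_le; [|apply ex_series_dominated; auto].
  intros n. rewrite Rmult_0_l. split; [lra | apply H].
Qed.

Lemma Series_dominated_tail a N : dominated a -> (forall n, (n < N)%nat -> a n = 0) ->
  Series a <= 4 * (/2) ^ N.
Proof.
  intros H HN. rewrite (Series_incr_n_aux a N HN).
  replace (4 * (/2) ^ N) with ((/2) ^ N * Series (fun n => 2 * (/2) ^ n)).
  2:{ rewrite Series_scal_l, Series_geom; [lra|]. rewrite Rabs_pos_eq; lra. }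
  rewrite <- Series_scal_l. apply Series_le.
  - intros n. split; [apply H|]. pose proof (H (N + n)%nat) as [_ h]. rewrite pow_add in h. lra.
  - apply (ex_series_scal_l (V := R_NormedModule)), ex_series_geom_double.
Qed.

Lemma Series_dominated_term a k : dominated a -> a k <= Series a.
Proof.
  intros H. rewrite (Series_incr_n a (S k)); [|lia|apply ex_series_dominated; auto].
  assert (0 <= Series (fun j => a (S k + j)%nat)).
  { apply Series_dominated_ge0. intros n. split; [apply H|].
    pose proof (H (S k + n)%nat) as [_ h]. rewrite pow_add in h.
    pose proof (pow_half_pos (S k)). assert (0 <= (/2) ^ n) by (apply pow_le; lra). nra. }
  destruct k as [|k]; simpl in *; [lra|].
  assert (0 <= sum_f_R0 a k) by (apply cond_pos_sum; intros; apply H). lra.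
Qed.

Definition indicator (P : Prop) : R := if excluded_middle_informative P then 1 else 0.

Lemma indicator_true (P : Prop) : P -> indicator P = 1.
Proof. unfold indicator; destruct excluded_middle_informative; tauto. Qed.

Lemma indicator_false (P : Prop) : ~ P -> indicator P = 0.
Proof. unfold indicator; destruct excluded_middle_informative; tauto. Qed.

Lemma indicator_bounds (P : Prop) : 0 <= indicator P <= 1.
Proof. unfold indicator; destruct excluded_middle_informative; lra. Qed.

Lemma indicator_le (P Q : Prop) : (P -> Q) -> indicator P <= indicator Q.
Proof. unfold indicator; do 2 destruct excluded_middle_informative; try lra; tauto. Qed.

Lemma indicator_ext (P Q : Prop) : (P <-> Q) -> indicator P = indicator Q.
Proof. unfold indicator; do 2 destruct excluded_middle_informative; try lra; tauto. Qed.

Section Staircase.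

Variables (SR SL : R -> Prop) (kR kL : R -> nat).

(* A jump of size 2^-(kR h) sits just left of each h in SR (so staircase is
   right-continuous at h) and one of size 2^-(kL h) just right of each h in SL. *)
Definition jumps (x : R) (n : nat) : R :=
  (/2) ^ n * (indicator (exists h, SR h /\ kR h = n /\ h <= x) +
              indicator (exists h, SL h /\ kL h = n /\ h < x)).

Definition staircase (x : R) : R := atan x + Series (jumps x).

Lemma jumps_dominated x : dominated (jumps x).
Proof.
  intros n. unfold jumps. pose proof (pow_half_pos n).
  pose proof (indicator_bounds (exists h, SR h /\ kR h = n /\ h <= x)).
  pose proof (indicator_bounds (exists h, SL h /\ kL h = n /\ h < x)). nra.
Qed.

Lemma jumps_le x y n : x <= y -> jumps x n <= jumps y n.
Proof.
  intros Hxy. unfold jumps. pose proof (pow_half_pos n).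
  assert (indicator (exists h, SR h /\ kR h = n /\ h <= x) <=
          indicator (exists h, SR h /\ kR h = n /\ h <= y)).
  { apply indicator_le. intros [h [? [? ?]]]. exists h. repeat split; auto; lra. }
  assert (indicator (exists h, SL h /\ kL h = n /\ h < x) <=
          indicator (exists h, SL h /\ kL h = n /\ h < y)).
  { apply indicator_le. intros [h [? [? ?]]]. exists h. repeat split; auto; lra. }
  nra.
Qed.

Lemma jumps_diff_dominated x y : x <= y -> dominated (fun n => jumps y n - jumps x n).
Proof.
  intros Hxy n. pose proof (jumps_le x y n Hxy).
  pose proof (jumps_dominated x n). pose proof (jumps_dominated y n). lra.
Qed.

Lemma staircase_diff x y : x <= y ->
  staircase y - staircase x = atan y - atan x + Series (fun n => jumps y n - jumps x n).
Proof.
  intros Hxy. unfold staircase.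
  rewrite Series_minus; [lra | |]; apply ex_series_dominated, jumps_dominated.
Qed.

Lemma staircase_lt x y : x < y -> staircase x < staircase y.
Proof.
  intros Hxy. enough (0 < staircase y - staircase x) by lra.
  rewrite staircase_diff by lra. pose proof (atan_increasing x y Hxy).
  pose proof (Series_dominated_ge0 _ (jumps_diff_dominated x y (Rlt_le _ _ Hxy))). lra.
Qed.

Lemma staircase_le x y : x <= y -> staircase x <= staircase y.
Proof. intros [h| ->]; [apply Rlt_le, staircase_lt; auto | lra]. Qed.

Lemma staircase_bounds x : -2 < staircase x < 6.
Proof.
  unfold staircase. pose proof (atan_bound x). pose proof PI_4.
  pose proof (Series_dominated_ge0 _ (jumps_dominated x)).
  pose proof (Series_dominated_tail _ 0 (jumps_dominated x) (fun n h => ltac:(lia))).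
  simpl in *. lra.
Qed.

Hypothesis HkR : injective_on SR kR.
Hypothesis HkL : injective_on SL kL.

Lemma staircase_jump_right h y : SR h -> y < h -> staircase y + (/2) ^ (kR h) <= staircase h.
Proof.
  intros Sh Hyh. enough ((/2) ^ (kR h) <= staircase h - staircase y) by lra.
  rewrite staircase_diff by lra. pose proof (atan_increasing y h Hyh).
  pose proof (Series_dominated_term _ (kR h) (jumps_diff_dominated y h (Rlt_le _ _ Hyh))) as HT.
  unfold jumps at 1 2 in HT.
  rewrite (indicator_true (exists h0, SR h0 /\ kR h0 = kR h /\ h0 <= h)) in HT
    by (exists h; repeat split; auto; lra).
  rewrite (indicator_false (exists h0, SR h0 /\ kR h0 = kR h /\ h0 <= y)) in HT.
  2:{ intros [h0 [S0 [E0 L0]]]. rewrite (HkR h0 h S0 Sh E0) in L0. lra. }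
  assert (indicator (exists h0, SL h0 /\ kL h0 = kR h /\ h0 < y) <=
          indicator (exists h0, SL h0 /\ kL h0 = kR h /\ h0 < h)).
  { apply indicator_le. intros [h0 [? [? ?]]]. exists h0. repeat split; auto; lra. }
  pose proof (pow_half_pos (kR h)). nra.
Qed.

Lemma staircase_jump_left h y : SL h -> h < y -> staircase h + (/2) ^ (kL h) <= staircase y.
Proof.
  intros Sh Hhy. enough ((/2) ^ (kL h) <= staircase y - staircase h) by lra.
  rewrite staircase_diff by lra. pose proof (atan_increasing h y Hhy).
  pose proof (Series_dominated_term _ (kL h) (jumps_diff_dominated h y (Rlt_le _ _ Hhy))) as HT.
  unfold jumps at 1 2 in HT.
  rewrite (indicator_true (exists h0, SL h0 /\ kL h0 = kL h /\ h0 < y)) in HT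
    by (exists h; repeat split; auto; lra).
  rewrite (indicator_false (exists h0, SL h0 /\ kL h0 = kL h /\ h0 < h)) in HT.
  2:{ intros [h0 [S0 [E0 L0]]]. rewrite (HkL h0 h S0 Sh E0) in L0. lra. }
  assert (indicator (exists h0, SR h0 /\ kR h0 = kL h /\ h0 <= h) <=
          indicator (exists h0, SR h0 /\ kR h0 = kL h /\ h0 <= y)).
  { apply indicator_le. intros [h0 [? [? ?]]]. exists h0. repeat split; auto; lra. }
  pose proof (pow_half_pos (kL h)). nra.
Qed.

Lemma codes_isolated_from x (kS : R -> nat) (S : R -> Prop) n :
  injective_on S kS -> exists d, 0 < d /\ forall h, S h -> kS h = n -> h <> x -> d <= Rabs (h - x).
Proof.
  intros Hk. destruct (classic (exists h, S h /\ kS h = n /\ h <> x)) as [[h0 [S0 [E0 N0]]]|Hn].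
  - exists (Rabs (h0 - x)). split; [apply Rabs_pos_lt; lra|].
    intros h Sh Eh _. rewrite (Hk h h0 Sh S0 ltac:(congruence)). lra.
  - exists 1. split; [lra|]. intros h Sh Eh Nh. exfalso. apply Hn. exists h; auto.
Qed.

(* Only finitely many jumps of size at least 2^-N, so they avoid a whole
   neighbourhood of x. *)
Lemma large_jumps_away_from x N : exists d, 0 < d /\ forall h,
  (SR h /\ (kR h < N)%nat \/ SL h /\ (kL h < N)%nat) -> h <> x -> d <= Rabs (h - x).
Proof.
  induction N as [|N [d [Hd IH]]].
  - exists 1. split; [lra|]. intros h [[_ H]|[_ H]]; lia.
  - destruct (codes_isolated_from x kR SR N HkR) as [dR [HdR HR]].
    destruct (codes_isolated_from x kL SL N HkL) as [dL [HdL HL]].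
    exists (Rmin d (Rmin dR dL)). split; [repeat apply Rmin_glb_lt; auto|].
    intros h Hs Hx. pose proof (Rmin_l d (Rmin dR dL)). pose proof (Rmin_r d (Rmin dR dL)).
    pose proof (Rmin_l dR dL). pose proof (Rmin_r dR dL).
    destruct Hs as [[S1 E1]|[S1 E1]].
    + destruct (Nat.eq_dec (kR h) N) as [E|E].
      * pose proof (HR h S1 E Hx). lra.
      * assert (Hk : (kR h < N)%nat) by lia. pose proof (IH h (or_introl (conj S1 Hk)) Hx). lra.
    + destruct (Nat.eq_dec (kL h) N) as [E|E].
      * pose proof (HL h S1 E Hx). lra.
      * assert (Hk : (kL h < N)%nat) by lia. pose proof (IH h (or_intror (conj S1 Hk)) Hx). lra.
Qed.

Lemma atan_continuous x e : 0 < e ->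
  exists d, 0 < d /\ forall y, Rabs (y - x) < d -> Rabs (atan y - atan x) < e.
Proof.
  intros He. destruct (derivable_continuous_pt atan x (derivable_pt_atan x) e He) as [d [Hd Hy]].
  exists d. split; auto. intros y Hyx.
  destruct (Req_dec y x) as [->|Hne]; [rewrite Rminus_diag, Rabs_R0; auto|].
  apply (Hy y). split; [split; [exact I | auto] | exact Hyx].
Qed.

Lemma staircase_increment_le x y N : x <= y ->
  (forall h, SR h -> (kR h < N)%nat -> ~ x < h <= y) ->
  (forall h, SL h -> (kL h < N)%nat -> ~ x <= h < y) ->
  staircase y - staircase x <= atan y - atan x + 4 * (/2) ^ N.
Proof.
  intros Hxy HR HL. rewrite staircase_diff by lra.
  enough (Series (fun n => jumps y n - jumps x n) <= 4 * (/2) ^ N) by lra.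
  apply (Series_dominated_tail _ N (jumps_diff_dominated x y Hxy)). intros n Hn. unfold jumps.
  rewrite (indicator_ext (exists h, SR h /\ kR h = n /\ h <= y)
                         (exists h, SR h /\ kR h = n /\ h <= x)),
          (indicator_ext (exists h, SL h /\ kL h = n /\ h < y)
                         (exists h, SL h /\ kL h = n /\ h < x)); [ring| |].
  - split; intros [h [Sh [Eh Lh]]]; exists h; repeat split; auto; [|lra].
    apply Rnot_le_lt. intros Hxh. subst n. exact (HL h Sh Hn (conj Hxh Lh)).
  - split; intros [h [Sh [Eh Lh]]]; exists h; repeat split; auto; [|lra].
    apply Rnot_lt_le. intros Hxh. subst n. exact (HR h Sh Hn (conj Hxh Lh)).
Qed.

Lemma staircase_right_continuous x e : ~ SL x -> 0 < e ->
  exists d, 0 < d /\ forall y, x <= y < x + d -> staircase y - staircase x < e.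
Proof.
  intros Hx He. destruct (atan_continuous x (e / 2)) as [da [Hda Ha]]; [lra|].
  destruct (small_pow_half (e / 8)) as [N HN]; [lra|].
  destruct (large_jumps_away_from x N) as [ds [Hds Hs]].
  exists (Rmin da ds). split; [apply Rmin_glb_lt; auto|]. intros y Hy.
  pose proof (Rmin_l da ds). pose proof (Rmin_r da ds).
  assert (Hfar : forall h, (SR h /\ (kR h < N)%nat \/ SL h /\ (kL h < N)%nat) -> x < h -> ~ h <= y).
  { intros h Hh Hxh Hhy. pose proof (Hs h Hh ltac:(lra)). rewrite Rabs_pos_eq in *; lra. }
  pose proof (Ha y ltac:(rewrite Rabs_pos_eq; lra)) as HA. apply Rabs_def2 in HA.
  enough (staircase y - staircase x <= atan y - atan x + 4 * (/2) ^ N) by lra.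
  apply staircase_increment_le; [lra| |].
  - intros h Sh Hk [Hxh Hhy]. exact (Hfar h (or_introl (conj Sh Hk)) Hxh Hhy).
  - intros h Sh Hk [Hxh Hhy]. destruct (Req_dec h x) as [->|Hne]; [auto|].
    exact (Hfar h (or_intror (conj Sh Hk)) ltac:(lra) ltac:(lra)).
Qed.

Lemma staircase_left_continuous x e : ~ SR x -> 0 < e ->
  exists d, 0 < d /\ forall y, x - d < y <= x -> staircase x - staircase y < e.
Proof.
  intros Hx He. destruct (atan_continuous x (e / 2)) as [da [Hda Ha]]; [lra|].
  destruct (small_pow_half (e / 8)) as [N HN]; [lra|].
  destruct (large_jumps_away_from x N) as [ds [Hds Hs]].
  exists (Rmin da ds). split; [apply Rmin_glb_lt; auto|]. intros y Hy.
  pose proof (Rmin_l da ds). pose proof (Rmin_r da ds).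
  assert (Hfar : forall h, (SR h /\ (kR h < N)%nat \/ SL h /\ (kL h < N)%nat) -> h < x -> ~ y <= h).
  { intros h Hh Hhx Hyh. pose proof (Hs h Hh ltac:(lra)). rewrite Rabs_left in *; lra. }
  pose proof (Ha y ltac:(rewrite Rabs_left1; lra)) as HA. apply Rabs_def2 in HA.
  enough (staircase x - staircase y <= atan x - atan y + 4 * (/2) ^ N) by lra.
  apply staircase_increment_le; [lra| |].
  - intros h Sh Hk [Hyh Hhx]. destruct (Req_dec h x) as [->|Hne]; [auto|].
    exact (Hfar h (or_introl (conj Sh Hk)) ltac:(lra) ltac:(lra)).
  - intros h Sh Hk [Hyh Hhx]. exact (Hfar h (or_intror (conj Sh Hk)) Hhx Hyh).
Qed.

End Staircase.

(** * Embedding the non-isolated points *)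

Section SidedPoints.

Variable tau : (R -> Prop) -> Prop.
Hypothesis Htau : in_calT tau.
Hypothesis Hlc : locally_connected tau.

Definition right_jump (h : R) : Prop := right_sided tau h /\ ~ isolated tau h.
Definition left_jump (h : R) : Prop := left_sided tau h /\ ~ isolated tau h.

Lemma right_jump_code : exists k, injective_on right_jump k.
Proof.
  apply (code_of_disjoint_intervals right_jump
     (fun h x => h < x /\ forall h', right_sided tau h' -> h < h' -> x < h')).
  - intros h [HR Hi]. destruct (right_sided_gap tau Htau Hlc h HR Hi) as [d [Hd Hgap]].
    exists h, (h + d). split; [lra|]. intros x Hx. split; [lra|].
    intros h' HR' Hlt. pose proof (Hgap h' HR' Hlt). lra.
  - intros h h' x [HR _] [HR' _] [A1 B1] [A2 B2].
    destruct (Rtotal_order h h') as [c|[c|c]]; auto.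
    + pose proof (B1 h' HR' c). lra.
    + pose proof (B2 h HR c). lra.
Qed.

Lemma left_jump_code : exists k, injective_on left_jump k.
Proof.
  apply (code_of_disjoint_intervals left_jump
     (fun h x => x < h /\ forall h', left_sided tau h' -> h' < h -> h' < x)).
  - intros h [HL Hi]. destruct (left_sided_gap tau Htau Hlc h HL Hi) as [d [Hd Hgap]].
    exists (h - d), h. split; [lra|]. intros x Hx. split; [lra|].
    intros h' HL' Hlt. pose proof (Hgap h' HL' Hlt). lra.
  - intros h h' x [HL _] [HL' _] [A1 B1] [A2 B2].
    destruct (Rtotal_order h h') as [c|[c|c]]; auto.
    + pose proof (B2 h HL c). lra.
    + pose proof (B1 h' HL' c). lra.
Qed.

Variables kR kL : R -> nat.
Hypothesis HkR : injective_on right_jump kR.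
Hypothesis HkL : injective_on left_jump kL.

Let phi := staircase right_jump left_jump kR kL.

Lemma staircase_continuous_at x e : ~ isolated tau x -> 0 < e ->
  exists V, tau V /\ V x /\ forall y, V y -> ~ isolated tau y /\ Rabs (phi y - phi x) < e.
Proof.
  intros Hi He. destruct (nonisolated_nbhd tau Htau Hlc x Hi) as [V [HV [Vx [Vc Vi]]]].
  assert (Hright : ~ left_sided tau x ->
            exists d, 0 < d /\ forall y, x <= y < x + d -> Rabs (phi y - phi x) < e).
  { intros HL. destruct (staircase_right_continuous _ _ _ _ HkR HkL x e
      ltac:(intros [? _]; contradiction) He) as [d [Hd Hy]].
    exists d. split; auto. intros y Hxy. pose proof (Hy y Hxy).
    pose proof (staircase_le right_jump left_jump kR kL x y (proj1 Hxy)).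
    rewrite Rabs_pos_eq; unfold phi; lra. }
  assert (Hleft : ~ right_sided tau x ->
            exists d, 0 < d /\ forall y, x - d < y <= x -> Rabs (phi y - phi x) < e).
  { intros HR. destruct (staircase_left_continuous _ _ _ _ HkR HkL x e
      ltac:(intros [? _]; contradiction) He) as [d [Hd Hy]].
    exists d. split; auto. intros y Hxy. pose proof (Hy y Hxy).
    pose proof (staircase_le right_jump left_jump kR kL y x (proj2 Hxy)).
    rewrite Rabs_left1; unfold phi; lra. }
  destruct (classic (right_sided tau x)) as [HR|HR];
    [|destruct (classic (left_sided tau x)) as [HL|HL]].
  - destruct Hright as [d [Hd Hy]].
    { intros HL. exact (Hi (right_left_sided_isolated tau Htau x HR HL)). }
    exists (fun y => V y /\ x - 1 < y < x + d).
    split; [apply calT_open_and, calT_open_interval; auto|]. split; [split; auto; lra|].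
    intros y [Vy Hyr]. split; auto. apply Hy.
    pose proof (connected_right_sided tau Htau V x HR Vc Vx y Vy). lra.
  - destruct (Hleft HR) as [d [Hd Hy]].
    exists (fun y => V y /\ x - d < y < x + 1).
    split; [apply calT_open_and, calT_open_interval; auto|]. split; [split; auto; lra|].
    intros y [Vy Hyr]. split; auto. apply Hy.
    pose proof (connected_left_sided tau Htau V x HL Vc Vx y Vy). lra.
  - destruct (Hleft HR) as [d1 [Hd1 Hy1]]. destruct (Hright HL) as [d2 [Hd2 Hy2]].
    exists (fun y => V y /\ x - d1 < y < x + d2).
    split; [apply calT_open_and, calT_open_interval; auto|]. split; [split; auto; lra|].
    intros y [Vy Hyr]. split; auto.
    destruct (Rle_lt_dec x y); [apply Hy2 | apply Hy1]; lra.
Qed.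

(* At a right-sided point the jump of phi just below x makes phi^-1 of a small
   interval around phi x a half-open interval [x, ...). *)
Lemma staircase_open_at x U : ~ isolated tau x -> tau U -> U x ->
  exists l r, l < phi x < r /\ forall y, l < phi y < r -> U y.
Proof.
  intros Hi HU Ux. unfold phi.
  assert (Hle := staircase_le right_jump left_jump kR kL).
  assert (Hlt := staircase_lt right_jump left_jump kR kL).
  destruct (classic (right_sided tau x)) as [HR|HR];
    [|destruct (classic (left_sided tau x)) as [HL|HL]].
  - destruct (right_sided_nbhd tau Htau Hlc x U HR Hi HU Ux) as [e [He HUe]].
    exists (phi x - (/2) ^ (kR x)), (phi (x + e / 2)). unfold phi.
    pose proof (pow_half_pos (kR x)). pose proof (Hlt x (x + e / 2) ltac:(lra)).
    split; [lra|]. intros y [Hl Hr]. apply HUe. split.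
    + apply Rnot_lt_le. intros c.
      pose proof (staircase_jump_right right_jump left_jump kR kL HkR x y (conj HR Hi) c). lra.
    + apply Rnot_le_lt. intros c. pose proof (Hle (x + e / 2) y ltac:(lra)). lra.
  - destruct (left_sided_nbhd tau Htau Hlc x U HL Hi HU Ux) as [e [He HUe]].
    exists (phi (x - e / 2)), (phi x + (/2) ^ (kL x)). unfold phi.
    pose proof (pow_half_pos (kL x)). pose proof (Hlt (x - e / 2) x ltac:(lra)).
    split; [lra|]. intros y [Hl Hr]. apply HUe. split.
    + apply Rnot_le_lt. intros c. pose proof (Hle y (x - e / 2) ltac:(lra)). lra.
    + apply Rnot_lt_le. intros c.
      pose proof (staircase_jump_left right_jump left_jump kR kL HkL x y (conj HL Hi) c). lra.
  - destruct (two_sided_euclidean tau Htau Hlc x HR HL U HU Ux) as [e [He HUe]].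
    exists (phi (x - e / 2)), (phi (x + e / 2)). unfold phi.
    pose proof (Hlt (x - e / 2) x ltac:(lra)). pose proof (Hlt x (x + e / 2) ltac:(lra)).
    split; [lra|]. intros y [Hl Hr]. apply HUe, Rabs_def1.
    + apply Rnot_le_lt. intros c. pose proof (Hle (x + e / 2) y ltac:(lra)). lra.
    + apply Rnot_le_lt. intros c. pose proof (Hle y (x - e / 2) ltac:(lra)). lra.
Qed.

End SidedPoints.

Section Embedding.

Variables tau1 tau2 : (R -> Prop) -> Prop.
Hypothesis Htau1 : in_calT tau1.
Hypothesis Hlc1 : locally_connected tau1.
Hypothesis Htau2 : in_calT tau2.

Variables (a b : R) (g : R -> R).
Hypothesis Hab : a < b.
Hypothesis Heucl : forall z, a < z < b -> euclidean_at tau2 z.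
Hypothesis Hg : forall i, isolated tau1 i -> exists W, tau2 W /\ W (g i) /\
  (forall z, a < z < b -> ~ W z) /\ forall j, isolated tau1 j -> W (g j) -> j = i.

Variables kR kL : R -> nat.
Hypothesis HkR : injective_on (right_jump tau1) kR.
Hypothesis HkL : injective_on (left_jump tau1) kL.

Let phi := staircase (right_jump tau1) (left_jump tau1) kR kL.

Definition squeeze (x : R) : R := a + (b - a) / 8 * (phi x + 2).

Definition embedding (x : R) : R :=
  if excluded_middle_informative (isolated tau1 x) then g x else squeeze x.

Lemma squeeze_range x : a < squeeze x < b.
Proof.
  pose proof (staircase_bounds (right_jump tau1) (left_jump tau1) kR kL x).
  unfold squeeze, phi. split; nra.
Qed.

Lemma squeeze_lt x y : x < y -> squeeze x < squeeze y.
Proof.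
  intros Hxy. pose proof (staircase_lt (right_jump tau1) (left_jump tau1) kR kL x y Hxy).
  unfold squeeze, phi. nra.
Qed.

Lemma g_outside i : isolated tau1 i -> ~ a < g i < b.
Proof. intros Hi Hin. destruct (Hg i Hi) as [W [_ [Wg [Wab _]]]]. exact (Wab _ Hin Wg). Qed.

Lemma embedding_isolated x : isolated tau1 x -> embedding x = g x.
Proof. unfold embedding. destruct excluded_middle_informative; tauto. Qed.

Lemma embedding_not_isolated x : ~ isolated tau1 x -> embedding x = squeeze x.
Proof. unfold embedding. destruct excluded_middle_informative; tauto. Qed.

Lemma embedding_injective x y : embedding x = embedding y -> x = y.
Proof.
  intros Hxy.
  destruct (classic (isolated tau1 x)) as [Hx|Hx]; destruct (classic (isolated tau1 y)) as [Hy|Hy].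
  - rewrite !embedding_isolated in Hxy by auto.
    destruct (Hg x Hx) as [W [_ [Wx [_ Wj]]]]. symmetry. apply Wj; congruence.
  - rewrite embedding_isolated, embedding_not_isolated in Hxy by auto.
    exfalso. apply (g_outside x Hx). rewrite Hxy. apply squeeze_range.
  - rewrite embedding_not_isolated, embedding_isolated in Hxy by auto.
    exfalso. apply (g_outside y Hy). rewrite <- Hxy. apply squeeze_range.
  - rewrite !embedding_not_isolated in Hxy by auto.
    destruct (Rtotal_order x y) as [c|[c|c]]; auto; apply squeeze_lt in c; lra.
Qed.

Lemma embedding_continuous W : tau2 W -> tau1 (fun x => W (embedding x)).
Proof.
  intros HW. apply calT_open_local; auto. intros x Wx.
  destruct (classic (isolated tau1 x)) as [Hi|Hi].
  - exists (fun y => y = x). split; auto. split; auto. intros y ->. auto.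
  - rewrite embedding_not_isolated in Wx by auto.
    destruct (Heucl (squeeze x) (squeeze_range x) W HW Wx) as [e [He HWe]].
    destruct (staircase_continuous_at tau1 Htau1 Hlc1 kR kL HkR HkL x (e / ((b - a) / 8)) Hi)
      as [V [HV [Vx HVy]]]; [apply Rdiv_lt_0_compat; lra|].
    exists V. split; auto. split; auto. intros y Vy. destruct (HVy y Vy) as [Hiy Hd].
    rewrite embedding_not_isolated by auto. apply HWe. unfold squeeze.
    replace (a + (b - a) / 8 * (phi y + 2) - (a + (b - a) / 8 * (phi x + 2)))
      with ((b - a) / 8 * (phi y - phi x)) by ring.
    rewrite Rabs_mult, Rabs_pos_eq by lra.
    apply (Rmult_lt_compat_l ((b - a) / 8)) in Hd; [|lra].
    unfold phi in *. replace ((b - a) / 8 * (e / ((b - a) / 8))) with e in Hd by (field; lra). lra.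
Qed.

Lemma embedding_open_at U x : tau1 U -> U x ->
  exists N, tau2 N /\ N (embedding x) /\ forall y, N (embedding y) -> U y.
Proof.
  intros HU Ux. destruct (classic (isolated tau1 x)) as [Hi|Hi].
  - destruct (Hg x Hi) as [N [HN [Nx [Nab Ninj]]]]. rewrite embedding_isolated by auto.
    exists N. split; auto. split; auto. intros y Ny.
    destruct (classic (isolated tau1 y)) as [Hy|Hy].
    + rewrite embedding_isolated in Ny by auto. rewrite (Ninj y Hy Ny). auto.
    + rewrite embedding_not_isolated in Ny by auto. exfalso. exact (Nab _ (squeeze_range y) Ny).
  - destruct (staircase_open_at tau1 Htau1 Hlc1 kR kL HkR HkL x U Hi HU Ux) as [l [r [Hlr Hy]]].
    exists (fun z => (a + (b - a) / 8 * (l + 2) < z < a + (b - a) / 8 * (r + 2)) /\ a < z < b).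
    split; [apply calT_open_and; auto; apply calT_open_interval; auto|].
    rewrite embedding_not_isolated by auto.
    split; [split; [unfold squeeze, phi; split; nra | apply squeeze_range]|].
    intros y [Ny Nab]. destruct (classic (isolated tau1 y)) as [Hiy|Hiy].
    + rewrite embedding_isolated in Nab by auto. exfalso. exact (g_outside y Hiy Nab).
    + rewrite embedding_not_isolated in Ny by auto. apply Hy. unfold squeeze, phi in Ny. split; nra.
Qed.

Lemma embedding_open U : tau1 U -> exists W, tau2 W /\ forall x, U x <-> W (embedding x).
Proof.
  intros HU.
  exists (fun z => exists x N,
    tau2 N /\ N (embedding x) /\ (forall y, N (embedding y) -> U y) /\ N z).
  split.
  - apply calT_open_local; auto. intros z [x [N [HN [Nx [NU Nz]]]]].
    exists N. split; auto. split; auto. intros y Ny. exists x, N. auto.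
  - intros x. split.
    + intros Ux. destruct (embedding_open_at U x HU Ux) as [N [HN [Nx NU]]]. exists x, N. auto.
    + intros [x0 [N [_ [_ [NU Nz]]]]]. auto.
Qed.

End Embedding.

(* The non-isolated points are mapped increasingly into (a, b), where tau2 is
   Euclidean, by a rescaled staircase; the isolated points go to g. *)
Lemma embeds_into_of_isolated_map tau1 tau2 a b g :
  in_calT tau1 -> locally_connected tau1 -> in_calT tau2 -> a < b ->
  (forall z, a < z < b -> euclidean_at tau2 z) ->
  (forall i, isolated tau1 i -> exists W, tau2 W /\ W (g i) /\
     (forall z, a < z < b -> ~ W z) /\ forall j, isolated tau1 j -> W (g j) -> j = i) ->
  embeds_into tau1 tau2.
Proof.
  intros Htau1 Hlc1 Htau2 Hab Heucl Hg.
  destruct (right_jump_code tau1 Htau1 Hlc1) as [kR HkR].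
  destruct (left_jump_code tau1 Htau1 Hlc1) as [kL HkL].
  exists (embedding tau1 a b g kR kL). split; [|split].
  - intros x y. eapply embedding_injective; eauto.
  - intros W. eapply embedding_continuous; eauto.
  - intros U. eapply embedding_open; eauto.
Qed.

(** * Part (a) *)

Lemma isolated_code_of_separable tau : separable tau -> exists k, injective_on (isolated tau) k.
Proof.
  intros [D [[e He] HD]].
  destruct (choice (fun (i : R) (n : nat) => isolated tau i -> e n = i)) as [k Hk].
  { intros i. destruct (classic (isolated tau i)) as [Hi|Hi].
    - destruct (HD _ Hi (ex_intro _ i eq_refl)) as [x [-> Dx]]. destruct (He _ Dx) as [n Hn].
      exists n. auto.
    - exists 0%nat. intros; contradiction. }
  exists k. intros i j Hi Hj Hij. rewrite <- (Hk i Hi), <- (Hk j Hj), Hij. reflexivity.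
Qed.

Lemma pow_half_le_succ n n' : (n < n')%nat -> (/2) ^ n' <= (/2) ^ (S n).
Proof.
  intros H. replace n' with (S n + (n' - S n))%nat by lia. rewrite pow_add.
  pose proof (pow_half_pos (S n)) as [Hp _]. pose proof (pow_half_pos (n' - S n)) as [_ Hq].
  pose proof (Rmult_le_compat_l _ _ _ (Rlt_le _ _ Hp) Hq). lra.
Qed.

Lemma pow_half_apart n n' : n <> n' -> (/2) ^ (S n) <= Rabs ((/2) ^ n' - (/2) ^ n).
Proof.
  intros Hn. pose proof (pow_half_pos n). pose proof (pow_half_pos n').
  destruct (Nat.lt_gt_cases n n') as [[c|c] _]; auto.
  - pose proof (pow_half_le_succ n n' c). simpl in *. rewrite Rabs_left1; lra.
  - pose proof (pow_half_le_succ n' n c). simpl in *. rewrite Rabs_pos_eq; lra.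
Qed.

(* The isolated points of tau1 go to the sequence m + c 2^-k, accumulating
   only at m, the right end of the Euclidean interval (a, m) of tau2. *)
Theorem embeds_into_of_separable tau1 tau2 :
  in_calT tau1 -> in_calT tau2 -> locally_connected tau1 -> locally_connected tau2 ->
  separable tau1 -> ~ discrete tau2 -> embeds_into tau1 tau2.
Proof.
  intros Htau1 Htau2 Hlc1 Hlc2 Hsep Hnd.
  destruct (euclidean_interval_of_not_discrete tau2 Htau2 Hlc2 Hnd) as [a [b [Hab Heucl]]].
  destruct (isolated_code_of_separable tau1 Hsep) as [k Hk].
  set (m := (a + b) / 2). set (c := (b - m) / 2). assert (Hc : 0 < c) by (unfold c, m; lra).
  apply (embeds_into_of_isolated_map tau1 tau2 a m (fun i => m + c * (/2) ^ (k i)));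
    auto; [unfold m; lra | intros z Hz; apply Heucl; unfold m in *; lra |].
  intros i Hi. exists (fun z => Rabs (z - (m + c * (/2) ^ (k i))) < c * (/2) ^ (S (S (k i)))).
  pose proof (pow_half_pos (k i)). simpl pow.
  split; [apply calT_open_ball; auto|]. split; [|split].
  - rewrite Rminus_diag, Rabs_R0. nra.
  - intros z Hz Hb. apply Rabs_def2 in Hb. nra.
  - intros j Hj Hb. destruct (Nat.eq_dec (k i) (k j)) as [E|E]; [exact (Hk j i Hj Hi (eq_sym E))|].
    pose proof (pow_half_apart (k i) (k j) E) as Hap. exfalso.
    replace (m + c * (/2) ^ k j - (m + c * (/2) ^ k i)) with (c * ((/2) ^ k j - (/2) ^ k i))
      in Hb by ring.
    rewrite Rabs_mult, (Rabs_pos_eq c) in Hb by lra. simpl in Hap. nra.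
Qed.

(** * Part (b) *)

Section Condensation.

Variable A : R -> Prop.

Definition uncountable_in (a b : R) : Prop := ~ countable_set (fun x => A x /\ a < x < b).

Lemma uncountable_in_widen a b a' b' :
  a' <= a -> b <= b' -> uncountable_in a b -> uncountable_in a' b'.
Proof.
  intros H1 H2 Hab Hc. apply Hab. eapply countable_subset; [|exact Hc].
  intros x [Ax Hx]. split; auto; lra.
Qed.

Lemma uncountable_in_inhabited a b : uncountable_in a b -> exists z, A z /\ a < z < b.
Proof.
  intros Hab. apply NNPP. intros Hn. apply Hab. exists (fun _ => 0).
  intros x Hx. exfalso. apply Hn. exists x; auto.
Qed.

(* Otherwise (a, b) is covered by countably many dyadic intervals each
   containing countably many points of A. *)
Lemma condensation_point a b : uncountable_in a b ->
  exists x, a < x < b /\ forall r, 0 < r -> uncountable_in (x - r) (x + r).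
Proof.
  intros Hab. apply NNPP. intros Hn. apply Hab.
  eapply countable_subset;
    [|apply (countable_union (fun i j => ~ uncountable_in (dyadic i) (dyadic j))
    (fun i j x => A x /\ dyadic i < x < dyadic j))].
  - intros x [Ax Hx].
    assert (exists r, 0 < r /\ ~ uncountable_in (x - r) (x + r)) as [r [Hr Hnb]].
    { apply NNPP. intros Hn2. apply Hn. exists x. split; auto. intros r Hr.
      apply NNPP. intros Hb2. apply Hn2. exists r; auto. }
    destruct (dyadic_dense (x - r) x ltac:(lra)) as [i Hi].
    destruct (dyadic_dense x (x + r) ltac:(lra)) as [j Hj].
    exists i, j. split; [|split; auto; lra].
    intros Hb2. apply Hnb. eapply uncountable_in_widen; [| |exact Hb2]; lra.
  - intros i j Hij. apply NNPP. exact Hij.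
Qed.

Lemma uncountable_in_near a b x r : a < x - r -> x + r < b -> 0 < r ->
  (forall r, 0 < r -> uncountable_in (x - r) (x + r)) -> uncountable_in a b.
Proof.
  intros H1 H2 Hr Hx. apply (uncountable_in_widen (x - r) (x + r)); [lra | lra | apply Hx, Hr].
Qed.

Lemma uncountable_in_split a b : uncountable_in a b ->
  exists c, a < c < b /\ uncountable_in a c /\ uncountable_in c b.
Proof.
  intros Hab. destruct (condensation_point a b Hab) as [x [Hx Hxr]].
  assert (Hboth : forall y z, a < y -> y < z -> z < b ->
      (forall r, 0 < r -> uncountable_in (y - r) (y + r)) ->
      (forall r, 0 < r -> uncountable_in (z - r) (z + r)) ->
      exists c, a < c < b /\ uncountable_in a c /\ uncountable_in c b).
  { intros y z H1 H2 H3 Hy Hz. exists ((y + z) / 2). split; [lra|]. split.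
    - pose proof (Rmin_l ((y - a) / 2) ((z - y) / 4)).
      pose proof (Rmin_r ((y - a) / 2) ((z - y) / 4)).
      assert (0 < Rmin ((y - a) / 2) ((z - y) / 4)) by (apply Rmin_glb_lt; lra).
      apply (uncountable_in_near _ _ y (Rmin ((y - a) / 2) ((z - y) / 4))); auto; lra.
    - pose proof (Rmin_l ((b - z) / 2) ((z - y) / 4)).
      pose proof (Rmin_r ((b - z) / 2) ((z - y) / 4)).
      assert (0 < Rmin ((b - z) / 2) ((z - y) / 4)) by (apply Rmin_glb_lt; lra).
      apply (uncountable_in_near _ _ z (Rmin ((b - z) / 2) ((z - y) / 4))); auto; lra. }
  destruct (classic (uncountable_in a x)) as [Ha|Ha];
    [|destruct (classic (uncountable_in x b)) as [Hb|Hb]].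
  - destruct (condensation_point a x Ha) as [y [Hy Hyr]]. apply (Hboth y x); auto; lra.
  - destruct (condensation_point x b Hb) as [y [Hy Hyr]]. apply (Hboth x y); auto; lra.
  - exfalso. apply Hab.
    eapply countable_subset; [|apply (countable_union3 _ _ x (NNPP _ Ha) (NNPP _ Hb))].
    intros z [Az Hz]. destruct (Rtotal_order z x) as [c|[c|c]];
      [left | right; right | right; left]; try (split; [auto | lra]); auto.
Qed.

Lemma uncountable_in_shrink a b e : uncountable_in a b -> 0 < e ->
  exists a' b', a < a' /\ a' < b' /\ b' < b /\ b' - a' < e /\ uncountable_in a' b'.
Proof.
  intros Hab He. destruct (condensation_point a b Hab) as [x [Hx Hxr]].
  pose proof (Rmin_l (e / 3) (Rmin ((x - a) / 2) ((b - x) / 2))).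
  pose proof (Rmin_r (e / 3) (Rmin ((x - a) / 2) ((b - x) / 2))).
  pose proof (Rmin_l ((x - a) / 2) ((b - x) / 2)). pose proof (Rmin_r ((x - a) / 2) ((b - x) / 2)).
  set (r := Rmin (e / 3) (Rmin ((x - a) / 2) ((b - x) / 2))) in *.
  assert (0 < r) by (apply Rmin_glb_lt; [lra | apply Rmin_glb_lt; lra]).
  exists (x - r), (x + r). repeat split; try lra. apply Hxr; auto.
Qed.

(* The outer points of A make every branch point below a two-sided limit of A. *)
Definition good_split (a b e : R) (t : R * R * R * R) : Prop :=
  let '(a1, b1, a2, b2) := t in
  a < a1 /\ a1 < b1 /\ b1 < a2 /\ a2 < b2 /\ b2 < b /\
  b1 - a1 < e /\ b2 - a2 < e /\ uncountable_in a1 b1 /\ uncountable_in a2 b2 /\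
  (exists z, A z /\ a < z < a1) /\ (exists z, A z /\ b2 < z < b).

Lemma good_split_exists a b e : uncountable_in a b -> 0 < e -> exists t, good_split a b e t.
Proof.
  intros Hab He. destruct (uncountable_in_split a b Hab) as [c [Hc [Hac Hcb]]].
  destruct (uncountable_in_split a c Hac) as [c1 [Hc1 [H1 H2]]].
  destruct (uncountable_in_split c b Hcb) as [c2 [Hc2 [H3 H4]]].
  destruct (uncountable_in_shrink c1 c e H2 He) as [a1 [b1 [? [? [? [? ?]]]]]].
  destruct (uncountable_in_shrink c c2 e H3 He) as [a2 [b2 [? [? [? [? ?]]]]]].
  destruct (uncountable_in_inhabited a c1 H1) as [z1 [Az1 Hz1]].
  destruct (uncountable_in_inhabited c2 b H4) as [z2 [Az2 Hz2]].
  exists (a1, b1, a2, b2). simpl. repeat split; auto; try lra.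
  - exists z1. split; auto; lra.
  - exists z2. split; auto; lra.
Qed.

Definition child (bit : bool) (e : R) (s : R * R) : R * R :=
  let '(a1, b1, a2, b2) := epsilon (inhabits (0, 0, 0, 0)) (good_split (fst s) (snd s) e) in
  if bit then (a2, b2) else (a1, b1).

Lemma child_spec s e : uncountable_in (fst s) (snd s) -> 0 < e ->
  good_split (fst s) (snd s) e (fst (child false e s), snd (child false e s),
                                fst (child true e s), snd (child true e s)).
Proof.
  intros Hs He. pose proof (epsilon_spec (inhabits (0, 0, 0, 0)) (good_split (fst s) (snd s) e)
    (good_split_exists (fst s) (snd s) e Hs He)) as Hspec.
  unfold child. destruct (epsilon _ _) as [[[a1 b1] a2] b2]. exact Hspec.
Qed.

Lemma child_inside bit s e : uncountable_in (fst s) (snd s) -> 0 < e ->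
  fst s < fst (child bit e s) /\ fst (child bit e s) < snd (child bit e s) /\
  snd (child bit e s) < snd s /\ snd (child bit e s) - fst (child bit e s) < e /\
  uncountable_in (fst (child bit e s)) (snd (child bit e s)) /\
  (exists z, A z /\ fst s < z < fst (child bit e s)) /\
  (exists z, A z /\ snd (child bit e s) < z < snd s).
Proof.
  intros Hs He. destruct (child_spec s e Hs He) as
    [? [? [? [? [? [? [? [? [? [[z1 [? ?]] [z2 [? ?]]]]]]]]]]]].
  destruct bit; repeat split; auto; try lra; [exists z1 | exists z2 | exists z1 | exists z2];
    split; auto; lra.
Qed.

Lemma children_apart s e : uncountable_in (fst s) (snd s) -> 0 < e ->
  snd (child false e s) < fst (child true e s).
Proof. intros Hs He. destruct (child_spec s e Hs He) as [? [? [? _]]]. auto. Qed.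

Fixpoint nested (s0 : R * R) (sg : nat -> bool) (n : nat) : R * R :=
  match n with 0%nat => s0 | S n => child (sg n) ((/2) ^ n) (nested s0 sg n) end.

Variable s0 : R * R.
Hypothesis Hs0 : uncountable_in (fst s0) (snd s0).

Lemma nested_uncountable sg n : uncountable_in (fst (nested s0 sg n)) (snd (nested s0 sg n)).
Proof.
  induction n; simpl; auto.
  pose proof (pow_half_pos n). apply (child_inside (sg n) _ ((/2) ^ n) IHn ltac:(lra)).
Qed.

Lemma nested_step sg n :
  let s := nested s0 sg n in let s' := nested s0 sg (S n) in
  fst s < fst s' /\ fst s' < snd s' /\ snd s' < snd s /\ snd s' - fst s' < (/2) ^ n /\
  (exists z, A z /\ fst s < z < fst s') /\ (exists z, A z /\ snd s' < z < snd s).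
Proof.
  pose proof (pow_half_pos n).
  destruct (child_inside (sg n) _ ((/2) ^ n) (nested_uncountable sg n) ltac:(lra))
    as [? [? [? [? [? [? ?]]]]]].
  simpl. repeat split; auto.
Qed.

Lemma nested_mono sg n m : (n <= m)%nat ->
  fst (nested s0 sg n) <= fst (nested s0 sg m) /\ snd (nested s0 sg m) <= snd (nested s0 sg n).
Proof.
  intros Hnm. induction Hnm; [lra|]. destruct (nested_step sg m) as [? [? [? _]]]. lra.
Qed.

Lemma nested_fst_lt_snd sg n m : fst (nested s0 sg n) < snd (nested s0 sg m).
Proof.
  destruct (nested_mono sg n (Nat.max n m) ltac:(lia)) as [H1 _].
  destruct (nested_mono sg m (Nat.max n m) ltac:(lia)) as [_ H2].
  destruct (nested_step sg (Nat.max n m)) as [? [? [? _]]]. simpl in *.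
  destruct (nested_mono sg (Nat.max n m) (S (Nat.max n m)) ltac:(lia)). lra.
Qed.

Definition branch_point (sg : nat -> bool) : R :=
  epsilon (inhabits 0) (is_lub (fun x => exists n, x = fst (nested s0 sg n))).

Lemma branch_point_inside sg n :
  fst (nested s0 sg n) <= branch_point sg <= snd (nested s0 sg n).
Proof.
  assert (Hex : exists p, is_lub (fun x => exists n, x = fst (nested s0 sg n)) p).
  { destruct (completeness (fun x => exists n, x = fst (nested s0 sg n))) as [p Hp].
    - exists (snd (nested s0 sg 0)). intros x [k ->]. left. apply nested_fst_lt_snd.
    - exists (fst (nested s0 sg 0)), 0%nat. auto.
    - exists p; auto. }
  destruct (epsilon_spec (inhabits 0) _ Hex) as [Hub Hl]. fold (branch_point sg) in Hub, Hl.
  split; [apply Hub; exists n; auto|].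
  apply Hl. intros x [k ->]. left. apply nested_fst_lt_snd.
Qed.

Lemma branch_point_approached sg y : y <> branch_point sg ->
  exists z, A z /\ Rmin y (branch_point sg) < z < Rmax y (branch_point sg).
Proof.
  intros Hy. set (p := branch_point sg).
  destruct (small_pow_half (Rabs (y - p))) as [k Hk]; [apply Rabs_pos_lt, Rminus_eq_contra, Hy|].
  pose proof (pow_half_pos k).
  destruct (nested_step sg k) as [_ [_ [_ [Hlen _]]]].
  destruct (nested_step sg (S k)) as [_ [_ [_ [_ [[z1 [A1 Hz1]] [z2 [A2 Hz2]]]]]]].
  pose proof (branch_point_inside sg (S k)). pose proof (branch_point_inside sg (S (S k))).
  fold p in H0, H1. simpl in Hlen, Hz1, Hz2, H0, H1 |- *.
  destruct (Rlt_dec y p) as [c|c].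
  - rewrite Rabs_left in Hk by lra. rewrite Rmin_left, Rmax_right by lra.
    exists z1. split; auto; lra.
  - rewrite Rabs_pos_eq in Hk by lra. rewrite Rmin_right, Rmax_left by lra.
    exists z2. split; auto; lra.
Qed.

Lemma branch_point_injective sg sg' : branch_point sg = branch_point sg' -> forall n, sg n = sg' n.
Proof.
  intros Heq. enough (H : forall n j, (j < n)%nat -> sg j = sg' j)
    by (intros n; apply (H (S n)); lia).
  induction n as [|n IH]; intros j Hj; [lia|].
  destruct (Nat.eq_dec j n) as [->|Hne]; [|apply IH; lia].
  assert (Hpre : nested s0 sg n = nested s0 sg' n).
  { clear Hj. induction n as [|n IHn]; simpl; auto.
    rewrite IHn, (IH n) by (auto; intros; apply IH; lia). reflexivity. }
  pose proof (branch_point_inside sg (S n)) as P1. pose proof (branch_point_inside sg' (S n)) as P2.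
  simpl in P1, P2. rewrite <- Hpre in P2.
  pose proof (pow_half_pos n).
  pose proof (children_apart (nested s0 sg n) ((/2) ^ n) (nested_uncountable sg n) ltac:(lra)).
  destruct (sg n), (sg' n); auto; lra.
Qed.

End Condensation.

Section NotSeparable.

Variable tau : (R -> Prop) -> Prop.
Hypothesis Htau : in_calT tau.
Hypothesis Hlc : locally_connected tau.

(* A connected neighbourhood of a non-isolated p is an interval at p free of
   isolated points. *)
Lemma isolated_of_approached p :
  (forall y, y <> p -> exists z, isolated tau z /\ Rmin y p < z < Rmax y p) -> isolated tau p.
Proof.
  intros Happ. apply NNPP. intros Hi.
  destruct (connected_nbhd_full tau Htau Hlc p Hi) as [V [HV [Vp [Vc [y [Vy Hy]]]]]].
  destruct (Happ y Hy) as [z [Hz Hyz]].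
  destruct (Rlt_dec y p) as [c|c].
  - rewrite Rmin_left, Rmax_right in Hyz by lra.
    pose proof (connected_convex tau Htau V y p z Vc Vy Vp Hyz) as Vz.
    pose proof (connected_isolated tau Htau V p z Vc Vp Vz Hz). lra.
  - rewrite Rmin_right, Rmax_left in Hyz by lra.
    pose proof (connected_convex tau Htau V p y z Vc Vp Vy Hyz) as Vz.
    pose proof (connected_isolated tau Htau V p z Vc Vp Vz Hz). lra.
Qed.

(* Countably many isolated points, plus the dyadics, would be dense. *)
Lemma uncountable_isolated_of_not_separable : ~ separable tau ->
  exists a b, uncountable_in (isolated tau) a b.
Proof.
  intros Hns. apply NNPP. intros Hn. apply Hns.
  assert (Hc : countable_set (isolated tau)).
  { eapply countable_subset; [|apply (countable_union (fun i j => True)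
      (fun i j x => isolated tau x /\ - INR i < x < INR i))].
    - intros x Hx. destruct (INR_unbounded (Rabs x)) as [i Hi]. exists i, 0%nat.
      split; auto. split; auto. assert (Rabs x < INR i) as Hr by lra. apply Rabs_def2 in Hr. lra.
    - intros i j _. apply NNPP. intros Hb. apply Hn. exists (- INR i), (INR i). auto. }
  exists (fun x => isolated tau x \/ (exists n, dyadic n = x) \/ x = 0). split.
  - apply countable_union3; auto. exists dyadic. intros x [n Hn0]. exists n; auto.
  - intros U HU [x Ux]. destruct (classic (isolated tau x)) as [Hi|Hi]; [exists x; auto|].
    destruct (connected_nbhd_nontrivial tau Htau Hlc U x HU Ux Hi)
      as [V [HV [Vx [VU [Vc [y [Vy Hy]]]]]]].
    destruct (Rtotal_order x y) as [c|[c|c]]; [| congruence |].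
    + destruct (dyadic_dense x y c) as [n Hq]. exists (dyadic n).
      split; [|right; left; exists n; auto]. apply VU, (connected_convex tau Htau V x y); auto.
    + destruct (dyadic_dense y x c) as [n Hq]. exists (dyadic n).
      split; [|right; left; exists n; auto]. apply VU, (connected_convex tau Htau V y x); auto.
Qed.

(* x is sent to the branch point of the Cantor scheme coded by the dyadics below x. *)
Lemma isolated_injection_of_not_separable : ~ separable tau ->
  exists G : R -> R, (forall x y, G x = G y -> x = y) /\ forall x, isolated tau (G x).
Proof.
  intros Hns. destruct (uncountable_isolated_of_not_separable Hns) as [a [b Hab]].
  set (code := fun x n => if Rlt_dec (dyadic n) x then true else false).
  exists (fun x => branch_point (isolated tau) (a, b) (code x)). split.
  - intros x y Heq. pose proof (branch_point_injective _ (a, b) Hab _ _ Heq) as Hs.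
    destruct (Rtotal_order x y) as [c|[c|c]]; auto; exfalso;
      [destruct (dyadic_dense x y c) as [n Hn] | destruct (dyadic_dense y x c) as [n Hn]];
      specialize (Hs n); unfold code in Hs;
      destruct (Rlt_dec (dyadic n) x), (Rlt_dec (dyadic n) y); try discriminate; lra.
  - intros x. apply isolated_of_approached. intros y Hy.
    apply (branch_point_approached _ (a, b) Hab _ y Hy).
Qed.

End NotSeparable.

(* The isolated points of tau1 go injectively to isolated points of tau2,
   which lie outside its Euclidean interval. *)
Theorem embeds_into_of_not_separable tau1 tau2 :
  in_calT tau1 -> in_calT tau2 -> locally_connected tau1 -> locally_connected tau2 ->
  ~ separable tau2 -> ~ discrete tau2 -> embeds_into tau1 tau2.
Proof.
  intros Htau1 Htau2 Hlc1 Hlc2 Hns Hnd.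
  destruct (euclidean_interval_of_not_discrete tau2 Htau2 Hlc2 Hnd) as [a [b [Hab Heucl]]].
  destruct (isolated_injection_of_not_separable tau2 Htau2 Hlc2 Hns) as [G [HG HGi]].
  apply (embeds_into_of_isolated_map tau1 tau2 a b G); auto.
  intros i _. exists (fun y => y = G i). repeat split; [apply HGi | |].
  - intros z Hz ->. exact (euclidean_at_not_isolated _ _ (Heucl _ Hz) (HGi i)).
  - intros j _ Hj. apply HG; auto.
Qed.

Theorem proposition3 (tau1 tau2 : (R -> Prop) -> Prop) :
  in_calT tau1 -> in_calT tau2 ->
  locally_connected tau1 -> locally_connected tau2 ->
  (separable tau1 -> ~ discrete tau2 -> embeds_into tau1 tau2) /\
  (~ separable tau2 -> ~ discrete tau2 -> embeds_into tau1 tau2).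
Proof.
  intros Htau1 Htau2 Hlc1 Hlc2. split.
  - apply embeds_into_of_separable; auto.
  - apply embeds_into_of_not_separable; auto.
Qed.
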